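(* Let $X$ be a gamble, $I\subset\mathbb{R}$ an interval containing the image set of $X$, $\phi:I\to\mathbb{R}$ convex and $\psi:I\to\mathbb{R}$ concave. Let $\underline{P}$ be a 2-coherent lower prevision (defined on a set of gambles containing all gambles involved below, e.g. on all gambles) and $\overline{P}$ its conjugate upper prevision, and assume $\underline{P}(X)$ and $\overline{P}(X)$ are interior points of $I$. Then $$\underline{P}(\psi(X))\le\min\{\psi(\underline{P}(X)),\psi(\overline{P}(X))\},\qquad \overline{P}(\phi(X))\ge\max\{\phi(\underline{P}(X)),\phi(\overline{P}(X))\}.$$ Moreover: if $\phi'_+(\underline{P}(X))\ge 0$ then $\underline{P}(\phi(X))\ge\phi(\underline{P}(X))$; if $\phi'_-(\overline{P}(X))\le 0$ then $\underline{P}(\phi(X))\ge\phi(\overline{P}(X))$; if $\psi'_-(\overline{P}(X))\ge 0$ then $\overline{P}(\psi(X))\le\psi(\overline{P}(X))$; if $\psi'_+(\underline{P}(X))\le 0$ then $\overline{P}(\psi(X))\le\psi(\underline{P}(X))$.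
   Context: $\Pi$ is a partition of the sure event into pairwise disjoint non-impossible events; a gamble is a bounded map $X:\Pi\to\mathbb{R}$, with image set $\{X(\omega):\omega\in\Pi\}$; $f(X)$ denotes the gamble $\omega\mapsto f(X(\omega))$. A lower prevision $\underline{P}:\mathcal{D}\to\mathbb{R}$ on a set of gambles $\mathcal{D}$ is 2-coherent iff for all $X_0,X_1\in\mathcal{D}$, all $s_1\ge 0$ and all $s_0\in\mathbb{R}$, $\sup\big[s_1(X_1-\underline{P}(X_1))-s_0(X_0-\underline{P}(X_0))\big]\ge 0$. The conjugate upper prevision is $\overline{P}(Y)=-\underline{P}(-Y)$. $f'_+,f'_-$ denote right and left derivatives. *)

From HB Require Import structures.
From mathcomp Require Import all_boot all_order all_algebra.
From mathcomp Require Import all_classical all_reals all_analysis.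
Set Implicit Arguments. Unset Strict Implicit. Unset Printing Implicit Defensive.
Import Order.TTheory GRing.Theory Num.Theory.
Import numFieldNormedType.Exports.
Local Open Scope classical_set_scope.
Local Open Scope ring_scope.

Section Defs.
Variables (R : realType) (Omega : Type).

Definition gamble (X : Omega -> R) : Prop := exists M : R, forall w, `|X w| <= M.

Definition two_coherent (D : set (Omega -> R)) (LP : (Omega -> R) -> R) : Prop :=
  forall X0 X1, D X0 -> D X1 -> forall s1 s0 : R, 0 <= s1 ->
    0 <= sup (range (fun w => s1 * (X1 w - LP X1) - s0 * (X0 w - LP X0))).

Definition upper (LP : (Omega -> R) -> R) (Y : Omega -> R) : R :=
  - LP (fun w => - Y w).
End Defs.

Section RDefs.
Variable R : realType.

Definition convex_on (I : interval R) (f : R -> R) : Prop :=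
  forall x y t : R, x \in I -> y \in I -> 0 <= t <= 1 ->
    f (t * x + (1 - t) * y) <= t * f x + (1 - t) * f y.

Definition concave_on (I : interval R) (f : R -> R) : Prop :=
  forall x y t : R, x \in I -> y \in I -> 0 <= t <= 1 ->
    t * f x + (1 - t) * f y <= f (t * x + (1 - t) * y).

Definition interior_pt (I : interval R) (x : R) : Prop :=
  exists e : R, 0 < e /\ forall y, `|y - x| < e -> y \in I.

Definition rderiv (f : R -> R) (a d : R) : Prop :=
  (fun h => (f (a + h) - f a) / h) @ 0^'+ --> d.
Definition lderiv (f : R -> R) (a d : R) : Prop :=
  (fun h => (f (a + h) - f a) / h) @ 0^'- --> d.
End RDefs.

From HB Require Import structures.
From mathcomp Require Import all_boot all_order all_algebra.
From mathcomp Require Import all_classical all_reals all_analysis.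
From mathcomp Require Import ring lra.
Import Order.TTheory GRing.Theory Num.Theory.
Import numFieldNormedType.Exports.
Local Open Scope classical_set_scope.
Local Open Scope ring_scope.
Set Implicit Arguments. Unset Strict Implicit.

(* A gamble bounded above by [c + k (X0 - LP X0)] has lower prevision at most [c], for every
   slope [k], since 2-coherence allows any sign of [s0]; a gamble bounded below by
   [c + k (X1 - LP X1)] has lower prevision at least [c] only when [k >= 0].  Applied with
   [X0, X1] among [X] and [-X] (note [X - upper LP X = - (-X - LP (-X))]), the supporting lines
   of the concave [psi] at [LP X] and [upper LP X] give the bounds on [LP (psi X)], and those of
   [-phi] the bounds on [upper LP (phi X)].  For [LP (phi X)] a supporting line of [phi] is
   needed whose slope has the sign that coherence accepts; the one-sided derivatives provide it. *)

Section ConvexSupportingLines.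
Variable R : realType.
Implicit Types (S : set R) (f : R -> R) (a d k x y z : R).

Definition convex_in S f := forall x y t, S x -> S y -> 0 <= t <= 1 ->
  f (t * x + (1 - t) * y) <= t * f x + (1 - t) * f y.

Definition slope f x y := (f y - f x) / (y - x).

Lemma convex_in_chord S f x y z : convex_in S f -> S x -> S z -> x < y < z ->
  (z - x) * f y <= (z - y) * f x + (y - x) * f z.
Proof.
move=> cf Sx Sz /andP[xy yz]; have zx : 0 < z - x by lra.
pose t := (z - y) / (z - x).
have t01 : 0 <= t <= 1 by apply/andP; rewrite ler_pdivrMr ?divr_ge0; lra.
have := ler_wpM2l (ltW zx) (cf x z t Sx Sz t01).
have -> : t * x + (1 - t) * z = y by rewrite /t; field; lra.
by congr (_ <= _); rewrite /t; field; lra.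
Qed.

Lemma convex_slope_mid S f x y z : convex_in S f -> S x -> S z -> x < y < z ->
  slope f x y <= slope f y z.
Proof.
move=> cf Sx Sz xyz; have := convex_in_chord cf Sx Sz xyz.
move: xyz => /andP[xy yz]; rewrite /slope ler_pdivrMr ?subr_gt0 //.
by rewrite mulrAC ler_pdivlMr ?subr_gt0 //; nra.
Qed.

Lemma convex_slope_left S f x y z : convex_in S f -> S x -> S z -> x < y < z ->
  slope f x y <= slope f x z.
Proof.
move=> cf Sx Sz xyz; have := convex_in_chord cf Sx Sz xyz.
move: xyz => /andP[xy yz]; rewrite /slope ler_pdivrMr ?subr_gt0 //.
by rewrite mulrAC ler_pdivlMr ?subr_gt0 //; nra.
Qed.

Lemma line_le_of_slopes f a k x :
  (x < a -> slope f x a <= k) -> (a < x -> k <= slope f a x) ->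
  f a + k * (x - a) <= f x.
Proof.
rewrite /slope; have [xa|ax|->] := ltgtP x a; last by move=> _ _; rewrite subrr mulr0 addr0.
- by move=> /(_ isT) + _; rewrite ler_pdivrMr ?subr_gt0 //; nra.
- by move=> _ /(_ isT); rewrite ler_pdivlMr ?subr_gt0 //; nra.
Qed.

Lemma nbhs_shift_right S a : nbhs a S -> \forall h \near 0^'+, S (a + h).
Proof. by move=> /nbhs0P; apply: cvg_within. Qed.

Lemma nbhs_shift_left S a : nbhs a S -> \forall h \near 0^'-, S (a + h).
Proof. by move=> /nbhs0P; apply: cvg_within. Qed.

Lemma slope_shift f a h : slope f a (a + h) = (f (a + h) - f a) / h.
Proof. by rewrite /slope addrAC subrr add0r. Qed.

Lemma convex_supporting_line S f a : convex_in S f -> nbhs a S ->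
  exists k, forall x, S x -> f a + k * (x - a) <= f x.
Proof.
move=> cf Sa_nbhs; have Sa := nbhs_singleton Sa_nbhs.
have [hl [hl0 Sl]] := filter_ex (filterI (nbhs_left_lt 0) (nbhs_shift_left Sa_nbhs)).
have [hr [hr0 Sr]] := filter_ex (filterI (nbhs_right_gt 0) (nbhs_shift_right Sa_nbhs)).
pose E := [set slope f x a | x in [set x | S x /\ x < a]].
have E_ub y : S y -> a < y -> ubound E (slope f a y).
  by move=> Sy ay _ [x [Sx xa] <-]; apply: (convex_slope_mid cf Sx Sy); rewrite xa.
have supE : has_sup E.
  split; first by exists (slope f (a + hl) a), (a + hl); split => //; lra.
  by exists (slope f a (a + hr)); apply: E_ub => //; lra.
(* The supremum of the chord slopes from the left is a subgradient at [a]. *)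
exists (sup E) => x Sx; apply: line_le_of_slopes => [xa|ax].
  by apply: sup_upper_bound => //; exists x.
exact: ge_sup (supE.1) (E_ub x Sx ax).
Qed.

Lemma convex_rderiv_line S f a d : convex_in S f -> nbhs a S -> rderiv f a d ->
  forall x, S x -> f a + d * (x - a) <= f x.
Proof.
move=> cf Sa_nbhs fd x Sx; have Sa := nbhs_singleton Sa_nbhs.
apply: line_le_of_slopes => [xa|ax].
- apply: (cvgr_to_ge fd); near=> h; rewrite -slope_shift.
  apply: (convex_slope_mid cf Sx); first by near: h; exact: nbhs_shift_right.
  have : 0 < h by near: h; exact: nbhs_right_gt.
  lra.
- apply: (cvgr_to_le fd); near=> h; rewrite -slope_shift.
  apply: (convex_slope_left cf Sa Sx).
  have : 0 < h by near: h; exact: nbhs_right_gt.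
  have : h < x - a by near: h; apply: nbhs_right_lt; lra.
  lra.
Unshelve. all: by end_near.
Qed.

Lemma convex_lderiv_line S f b d : convex_in S f -> nbhs b S -> lderiv f b d ->
  forall x, S x -> f b + d * (x - b) <= f x.
Proof.
move=> cf Sb fd x Sx.
(* Reflect: [- d] is a right derivative of [f (- _)] at [- b]. *)
pose g y := f (- y).
have cg : convex_in [set y | S (- y)] g.
  move=> u v t Su Sv t01; rewrite /g opprD -!mulrN; exact: cf.
have Sg : nbhs (- b) [set y | S (- y)].
  by rewrite nbhsN; apply: filterS Sb => y /=; rewrite opprK.
have gd : rderiv g (- b) (- d).
  move: fd; rewrite /lderiv cvg_at_leftNP oppr0 => /cvgN; apply: cvg_trans.
  apply: near_eq_cvg; near=> h.
  by rewrite /g !fctE /= opprD !opprK invrN mulrN opprK.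
have := convex_rderiv_line cg Sg gd (x := - x); rewrite /g /= !opprK => /(_ Sx).
lra.
Unshelve. all: by end_near.
Qed.

Lemma diff_quotientN f a :
  (fun h => (- f (a + h) - - f a) / h) = (fun h => - ((f (a + h) - f a) / h)).
Proof. by apply: funext => h; rewrite -mulNr opprB opprK addrC. Qed.

Lemma rderivN f a d : rderiv f a d -> rderiv (fun x => - f x) a (- d).
Proof. by rewrite /rderiv diff_quotientN => /cvgN. Qed.

Lemma lderivN f a d : lderiv f a d -> lderiv (fun x => - f x) a (- d).
Proof. by rewrite /lderiv diff_quotientN => /cvgN. Qed.

End ConvexSupportingLines.

Lemma interior_pt_nbhs (R : realType) (I : interval R) x :
  interior_pt I x -> nbhs x [set y | y \in I].
Proof.
by move=> [e [e0 eI]]; apply/nbhs_ballP; exists e => // y; rewrite /ball /= distrC => /eI.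
Qed.

Lemma concave_on_convex_inN (R : realType) (I : interval R) g :
  concave_on I g -> convex_in [set y | y \in I] (fun y => - g y).
Proof. by move=> cg x y t Ix Iy t01; have := cg x y t Ix Iy t01; lra. Qed.

Section TwoCoherentLowerPrevision.
Variables (R : realType) (Omega : Type) (w0 : Omega).
Variables (D : set (Omega -> R)) (LP : (Omega -> R) -> R).
Hypothesis LP_coherent : two_coherent D LP.

(* Without the inhabitant [w0] the range would be empty and [sup set0 = 0] would say nothing. *)
Lemma two_coherent_ge0 X0 X1 s1 s0 c : D X0 -> D X1 -> 0 <= s1 ->
  (forall w, s1 * (X1 w - LP X1) - s0 * (X0 w - LP X0) <= c) -> 0 <= c.
Proof.
move=> DX0 DX1 s1_ge0 le_c; apply: le_trans (LP_coherent DX0 DX1 s0 s1_ge0) _.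
by apply: ge_sup; [exists (s1 * (X1 w0 - LP X1) - s0 * (X0 w0 - LP X0)), w0|move=> _ [w _ <-]].
Qed.

Lemma two_coherent_le_affine X0 Y c k : D X0 -> D Y ->
  (forall w, Y w <= c + k * (X0 w - LP X0)) -> LP Y <= c.
Proof.
move=> DX0 DY le_c; rewrite -subr_ge0.
by apply: (two_coherent_ge0 (s1 := 1) (s0 := k) DX0 DY) => // w; have := le_c w; lra.
Qed.

Lemma two_coherent_ge_affine X1 Y c k : D X1 -> D Y -> 0 <= k ->
  (forall w, c + k * (X1 w - LP X1) <= Y w) -> c <= LP Y.
Proof.
move=> DX1 DY k_ge0 ge_c; rewrite -subr_ge0.
by apply: (two_coherent_ge0 (s0 := 1) DY DX1 k_ge0) => w; have := ge_c w; lra.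
Qed.

Variables (X : Omega -> R) (S : set R).
Hypotheses (XS : forall w, S (X w)) (DX : D X) (DNX : D (fun w => - X w)).

Lemma LP_concave_le_lower g : convex_in S (fun x => - g x) -> nbhs (LP X) S ->
  D (fun w => g (X w)) -> LP (fun w => g (X w)) <= g (LP X).
Proof.
move=> cg S_nbhs Dg; have [k line_le] := convex_supporting_line cg S_nbhs.
by apply: (two_coherent_le_affine (k := - k) DX Dg) => w; have := line_le _ (XS w); lra.
Qed.

Lemma LP_concave_le_upper g : convex_in S (fun x => - g x) -> nbhs (upper LP X) S ->
  D (fun w => g (X w)) -> LP (fun w => g (X w)) <= g (upper LP X).
Proof.
move=> cg S_nbhs Dg; have [k line_le] := convex_supporting_line cg S_nbhs.
apply: (two_coherent_le_affine (k := k) DNX Dg) => w; have := line_le _ (XS w).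
rewrite /upper; lra.
Qed.

Lemma LP_convex_ge_lower f d : convex_in S f -> nbhs (LP X) S ->
  rderiv f (LP X) d -> 0 <= d -> D (fun w => f (X w)) -> f (LP X) <= LP (fun w => f (X w)).
Proof.
move=> cf S_nbhs fd d_ge0 Df; have line_le := convex_rderiv_line cf S_nbhs fd.
by apply: (two_coherent_ge_affine DX Df d_ge0) => w; exact: line_le.
Qed.

Lemma LP_convex_ge_upper f d : convex_in S f -> nbhs (upper LP X) S ->
  lderiv f (upper LP X) d -> d <= 0 -> D (fun w => f (X w)) ->
  f (upper LP X) <= LP (fun w => f (X w)).
Proof.
move=> cf S_nbhs fd d_le0 Df; have line_le := convex_lderiv_line cf S_nbhs fd.
apply: (two_coherent_ge_affine (k := - d) DNX Df) => [|w]; first lra.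
by have := line_le _ (XS w); rewrite /upper; lra.
Qed.

End TwoCoherentLowerPrevision.

Theorem theorem4 (R : realType) (Omega : Type) (w0 : Omega)
  (D : set (Omega -> R)) (LP : (Omega -> R) -> R)
  (X : Omega -> R) (I : interval R) (phi psi : R -> R) :
  (forall Y, D Y -> gamble Y) ->
  two_coherent D LP ->
  gamble X ->
  D X -> D (fun w => - X w) ->
  D (fun w => phi (X w)) -> D (fun w => - phi (X w)) ->
  D (fun w => psi (X w)) -> D (fun w => - psi (X w)) ->
  (forall w, X w \in I) ->
  convex_on I phi -> concave_on I psi ->
  interior_pt I (LP X) -> interior_pt I (upper LP X) ->
  (LP (fun w => psi (X w)) <= Num.min (psi (LP X)) (psi (upper LP X)) /\
      Num.max (phi (LP X)) (phi (upper LP X)) <= upper LP (fun w => phi (X w)) /\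
      ((exists d, rderiv phi (LP X) d /\ 0 <= d) ->
        phi (LP X) <= LP (fun w => phi (X w))) /\
      ((exists d, lderiv phi (upper LP X) d /\ d <= 0) ->
        phi (upper LP X) <= LP (fun w => phi (X w))) /\
      ((exists d, lderiv psi (upper LP X) d /\ 0 <= d) ->
        upper LP (fun w => psi (X w)) <= psi (upper LP X)) /\
      ((exists d, rderiv psi (LP X) d /\ d <= 0) ->
        upper LP (fun w => psi (X w)) <= psi (LP X))).
Proof.
move=> _ coh _ DX DNX Dphi DNphi Dpsi DNpsi IX cphi cpsi.
move=> /interior_pt_nbhs Ia /interior_pt_nbhs Ib.
pose S := [set y | y \in I].
have cpsiN : convex_in S (fun y => - psi y) := concave_on_convex_inN cpsi.
have cphiNN : convex_in S (fun y => - - phi y).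
  by move=> x y t Ix Iy t01; rewrite !opprK; exact: cphi.
have concave_le_lo := LP_concave_le_lower (S := S) w0 coh IX DX.
have concave_le_up := LP_concave_le_upper (S := S) w0 coh IX DNX.
have convex_ge_lo := LP_convex_ge_lower (S := S) w0 coh IX DX.
have convex_ge_up := LP_convex_ge_upper (S := S) w0 coh IX DNX.
split; first by rewrite le_min (concave_le_lo _ cpsiN Ia Dpsi) (concave_le_up _ cpsiN Ib Dpsi).
split.
  rewrite ge_max /upper; apply/andP; split; rewrite lerNr.
  - exact: concave_le_lo _ cphiNN Ia DNphi.
  - exact: concave_le_up _ cphiNN Ib DNphi.
split; first by move=> [d [phid d_ge0]]; exact: convex_ge_lo cphi Ia phid d_ge0 Dphi.
split; first by move=> [d [phid d_le0]]; exact: convex_ge_up cphi Ib phid d_le0 Dphi.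
split=> [[d [psid d_ge0]]|[d [psid d_le0]]]; rewrite /upper lerNl.
- by apply: (convex_ge_up _ _ cpsiN Ib (lderivN psid)) DNpsi; rewrite oppr_le0.
- by apply: (convex_ge_lo _ _ cpsiN Ia (rderivN psid)) DNpsi; rewrite oppr_ge0.
Qed.
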